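(* Let $H=[H_X\,|\,H_Z]$ be the $(n-k)\times 2n$ binary check matrix of an $[[n,k,d]]$ stabilizer code. By row operations (Gaussian elimination) and a reordering of the qubits, $H$ can be written in the standard form \[ H=\left[\begin{array}{cc|cc} A & I_{s\times s} & D & 0\\ C & 0 & B & I_{s\times s}\\ E & 0 & F & 0\end{array}\right],\qquad 0\le s\le n-k , \] where $A,B,C,D,E,F$ are binary matrices of appropriate sizes. Then for every integer $c$ with $0\le c\le s$, the matrix obtained from $H$ by deleting the last $c$ columns of $H_X$ and the last $c$ columns of $H_Z$ is the check matrix of the simplified stabilizer group of an $[[n-c,k,d;c]]_{AB}$ EAQEC code; in particular this code can correct any Pauli error of weight at most $\lfloor\frac{d-1}{2}\rfloor$ acting on Alice's $n-c$ qubits together with Bob's $c$ qubits. Moreover, if the stabilizer code is nondegenerate, the elimination can be carried out so that the resulting $s$ satisfies \[ d-1\le s\le \left\lfloor \tfrac{n-k}{2}\right\rfloor . \]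
   Context: Pauli operators on $n$ qubits are considered up to phase, i.e. as tensor products $M_1\otimes\cdots\otimes M_n$ with $M_j\in\{I,X,Y,Z\}$; the weight of such an operator is the number of non-identity factors. An $[[n,k,d]]$ stabilizer code is defined by an abelian subgroup $\mathcal S$ of the $n$-qubit Pauli group not containing $-I$, with $n-k$ independent generators; $d$ is the minimum weight of an element of $\mathcal N(\mathcal S)\setminus\mathcal S$, where $\mathcal N(\mathcal S)$ is the normalizer of $\mathcal S$ in the Pauli group. The check matrix has one row per generator; a Pauli $X^{a}Z^{b}$ (with $a,b\in\{0,1\}^n$) corresponds to the row $[a\,|\,b]$. The code is nondegenerate if every non-identity element of $\mathcal N(\mathcal S)$ has weight at least $d$. An $[[n',k,d;c]]$ entanglement-assisted (EAQEC) code: Alice and Bob share $c$ Bell pairs $\frac{1}{\sqrt2}(|00\rangle+|11\rangle)$; Alice encodes $k$ qubits into $n'$ qubits (including her halves of the ebits) with a Clifford unitary. It is specified by a simplified stabilizer group $\mathcal S'$ on Alice's $n'$ qubits generated by operators $g'_1,h'_1,\dots,g'_c,h'_c,g'_{c+1},\dots,g'_{n'-k-c}$, where $g'_i,h'_i$ anticommute for $i\le c$ and all other pairs of generators commute; the encoded state on all $n'+c$ qubits is stabilized by $g'_i\otimes Z_i$, $h'_i\otimes X_i$ ($i\le c$, the $Z_i,X_i$ acting on Bob's $i$-th qubit) and $g'_j\otimes I$ ($j>c$). Its minimum distance is the minimum weight of an element of $\mathcal N(\mathcal S')\setminus\mathcal S_I$, where $\mathcal S_I=\langle g'_{c+1},\dots,g'_{n'-k-c}\rangle$.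 The subscript $AB$ indicates that the stabilizer group on all $n'+c$ qubits (Alice's and Bob's) is that of a standard $[[n'+c,k,d]]$ stabilizer code, so that errors on Bob's qubits are corrected as well as those on Alice's. *)

(* Binary (phase-free) symplectic representation of Pauli
   operators: a Pauli X^a Z^b on N qubits is the row vector [a | b] of type
   'rV['F_2]_(N + N). *)
From HB Require Import structures.
From mathcomp Require Import all_boot all_order fingroup perm all_algebra.
Set Implicit Arguments.
Unset Strict Implicit.
Unset Printing Implicit Defensive.
Import GRing.Theory.
Local Open Scope ring_scope.

Definition pweight (N : nat) (u : 'rV['F_2]_(N + N)) : nat :=
  #|[set j : 'I_N | (lsubmx u 0 j != 0) || (rsubmx u 0 j != 0)]|.

(* symplectic product: 0 iff the two Paulis commute *)
Definition symp (N : nat) (u v : 'rV['F_2]_(N + N)) : 'F_2 :=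
  \sum_(j < N) (lsubmx u 0 j * rsubmx v 0 j + rsubmx u 0 j * lsubmx v 0 j).

Definition in_stab (m N : nat) (H : 'M['F_2]_(m, N + N)) (u : 'rV['F_2]_(N + N)) : Prop :=
  (u <= H)%MS.

Definition in_norm (m N : nat) (H : 'M['F_2]_(m, N + N)) (u : 'rV['F_2]_(N + N)) : Prop :=
  forall i : 'I_m, symp u (row i H) = 0.

Definition min_dist (m N : nat) (H : 'M['F_2]_(m, N + N)) (d : nat) : Prop :=
  (exists u, in_norm H u /\ ~ in_stab H u /\ pweight u = d) /\
  (forall u, in_norm H u -> ~ in_stab H u -> (d <= pweight u)%N).

Definition stab_code (N k d : nat) (m : nat) (H : 'M['F_2]_(m, N + N)) : Prop :=
  [/\ m = (N - k)%N, (k <= N)%N, row_free H,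
      (forall i j : 'I_m, symp (row i H) (row j H) = 0) & min_dist H d].
Arguments stab_code N k d {m} H.

Definition nondegenerate_code (m N : nat) (H : 'M['F_2]_(m, N + N)) (d : nat) : Prop :=
  forall u, in_norm H u -> u != 0 -> (d <= pweight u)%N.

(* the code corrects every Pauli error of weight <= t (Knill-Laflamme for
   stabilizer codes: E1^dag E2 is never in N(S) \ S) *)
Definition corrects (m N : nat) (H : 'M['F_2]_(m, N + N)) (t : nat) : Prop :=
  forall e1 e2 : 'rV['F_2]_(N + N), (pweight e1 <= t)%N -> (pweight e2 <= t)%N ->
    in_norm H (e1 + e2) -> in_stab H (e1 + e2).

Definition qperm (m n : nat) (p : 'S_n) (H : 'M['F_2]_(m, n + n)) : 'M['F_2]_(m, n + n) :=
  row_mx (col_perm p (lsubmx H)) (col_perm p (rsubmx H)).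

(* standard form with parameter s:
     [ A I_s | D 0   ]
     [ C 0   | B I_s ]
     [ E 0   | F 0   ]   (row blocks of sizes s, s, m - 2s;
                          column blocks of sizes n - s, s in each half) *)
Definition std_form (m n : nat) (s : nat) (H : 'M['F_2]_(m, n + n)) : Prop :=
  (2 * s <= m)%N /\
  forall (i : 'I_m) (j : 'I_n), (n - s <= j)%N ->
    lsubmx H i j = (i == (j - (n - s))%N :> nat)%:R /\
    rsubmx H i j = ((s <= i)%N && ((i - s)%N == (j - (n - s))%N))%:R.

Definition del_last (m n : nat) (c : nat) (H : 'M['F_2]_(m, n + n))
  : 'M['F_2]_(m, (n - c) + (n - c)) :=
  row_mx (\matrix_(i < m, j < n - c) lsubmx H i (widen_ord (leq_subr c n) j))
         (\matrix_(i < m, j < n - c) rsubmx H i (widen_ord (leq_subr c n) j)).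

(* Simplified stabilizer generators, listed as rows of G in the order
   g'_1..g'_c, h'_1..h'_c, g'_{c+1}, ... :
   g'_i and h'_i anticommute, all other pairs commute. *)
Definition ea_simplified (m n' : nat) (c : nat) (G : 'M['F_2]_(m, n' + n')) : Prop :=
  (2 * c <= m)%N /\
  forall i j : 'I_m, symp (row i G) (row j G) =
    (((i < c)%N && (j == (i + c)%N :> nat)) || ((j < c)%N && (i == (j + c)%N :> nat)))%:R.

(* Stabilizer on Alice's n' qubits followed by Bob's c qubits:
   g'_i (x) Z_i, h'_i (x) X_i (i <= c), g'_j (x) I (j > c). *)
Definition ea_ext (m n' : nat) (c : nat) (G : 'M['F_2]_(m, n' + n'))
  : 'M['F_2]_(m, (n' + c) + (n' + c)) :=
  row_mx (row_mx (lsubmx G) (\matrix_(i < m, j < c) (i == (c + j)%N :> nat)%:R))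
         (row_mx (rsubmx G) (\matrix_(i < m, j < c) (i == j :> nat)%:R)).

(* G (a check matrix on n' qubits) is the check matrix of the simplified
   stabilizer group of an [[n',k,d;c]]_AB EAQEC code, the generators being
   the rows of T *m G for an invertible row transformation T. *)
Definition eaqec_AB_via (m n' : nat) (k d c : nat) (G : 'M['F_2]_(m, n' + n'))
  (T : 'M['F_2]_m) : Prop :=
  [/\ T \in unitmx, ea_simplified c (T *m G) & stab_code (n' + c) k d (ea_ext c (T *m G))].
Arguments eaqec_AB_via {m} n' k d c G T.

(* Row operations and a common reordering of the X and Z columns preserve the
   symplectic form, the weights and the row space, hence every parameter of a
   stabilizer code.  In standard form the last c qubits meet only the 2c rows
   carrying the identity blocks there; listing first those with Z-identities
   (the g'_i) and then those with X-identities (the h'_i), deleting the c qubits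
   leaves exactly Alice's part of g'_i (x) Z_i, h'_i (x) X_i.  The extended
   stabilizer is thus the original code up to row and qubit reordering, and the
   (anti)commutation relations of the simplified generators are read off from
   the commutation of the extended ones.  For a nondegenerate code the X and Z
   columns of any d - 1 qubits are independent, since a dependency would be a
   nonzero normalizer element of weight < d; row reducing them to the identity
   gives a standard form with s = d - 1, and 2s <= n - k by rank. *)

From HB Require Import structures.
From mathcomp Require Import all_boot all_order fingroup perm all_algebra zify.
Set Implicit Arguments.
Unset Strict Implicit.
Unset Printing Implicit Defensive.
Import GRing.Theory.
Local Open Scope ring_scope.

Lemma F2_addr_eq0 (x y : 'F_2) : x + y = 0 -> x = y.
Proof.
by move/eqP; rewrite addr_eq0 (oppr_pchar2 (pchar_Fp (isT : prime 2))) => /eqP.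
Qed.

Lemma natr_or (R : pzSemiRingType) (a b : bool) :
  ~~ (a && b) -> (a || b)%:R = a%:R + b%:R :> R.
Proof. by case: a; case: b; rewrite ?addr0 ?add0r. Qed.

Lemma colsub_mul1 (R : pzSemiRingType) m n n' (g : 'I_n' -> 'I_n)
    (A : 'M[R]_(m, n)) :
  colsub g A = A *m colsub g 1%:M.
Proof. by rewrite mulmx_colsub mulmx1. Qed.

Lemma row_colsub (R : Type) m n n' (g : 'I_n' -> 'I_n) (A : 'M[R]_(m, n)) i :
  row i (colsub g A) = colsub g (row i A).
Proof. by apply/rowP => a; rewrite !mxE. Qed.

Definition symp_mx (N : nat) : 'M['F_2]_(N + N) := block_mx 0 1%:M 1%:M 0.

Lemma mul_symp_mx N p (X : 'M['F_2]_(p, N + N)) :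
  X *m symp_mx N = row_mx (rsubmx X) (lsubmx X).
Proof.
by rewrite -{1}(hsubmxK X) mul_row_block !mulmx0 !mulmx1 addr0 add0r.
Qed.

Lemma symp_mxK N : symp_mx N *m symp_mx N = 1%:M.
Proof.
by rewrite /symp_mx mulmx_block !mulmx0 !mul0mx !mulmx1 !addr0 !add0r scalar_mx_block.
Qed.

Lemma symp_rows N p r (X : 'M['F_2]_(p, N + N)) (Y : 'M['F_2]_(r, N + N)) i j :
  symp (row i X) (row j Y) = (X *m symp_mx N *m Y^T) i j.
Proof.
rewrite mul_symp_mx -[Y in Y^T]hsubmxK tr_row_mx mul_row_col !mxE -big_split /=.
by apply: eq_bigr => t _; rewrite !mxE addrC.
Qed.

Lemma symp_rowsE N p r (X : 'M['F_2]_(p, N + N)) (Y : 'M['F_2]_(r, N + N)) i j :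
  symp (row i X) (row j Y) =
  \sum_(t < N) (X i (lshift N t) * Y j (rshift N t)
                + X i (rshift N t) * Y j (lshift N t)).
Proof. by apply: eq_bigr => t _; rewrite !mxE. Qed.

Lemma in_normE m N (M : 'M['F_2]_(m, N + N)) u :
  in_norm M u <-> u *m symp_mx N *m M^T = 0.
Proof.
have row0 : row 0 u = u by apply/rowP => j; rewrite mxE.
split=> [uM | uM0 i].
  by apply/matrixP => a i; rewrite ord1 -symp_rows row0 uM mxE.
by rewrite -row0 symp_rows uM0 mxE.
Qed.

(* [colsub (qmap f)] moves the X and Z columns of qubit [f j] to qubit [j]. *)
Definition qmap (N N' : nat) (f : 'I_N' -> 'I_N) (t : 'I_(N' + N')) : 'I_(N + N) :=
  match split t with inl j => lshift N (f j) | inr j => rshift N (f j) end.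

Lemma qmap_lshift N N' (f : 'I_N' -> 'I_N) j : qmap f (lshift N' j) = lshift N (f j).
Proof. by rewrite /qmap (unsplitK (inl _ j)). Qed.

Lemma qmap_rshift N N' (f : 'I_N' -> 'I_N) j : qmap f (rshift N' j) = rshift N (f j).
Proof. by rewrite /qmap (unsplitK (inr _ j)). Qed.

Lemma qmapK N N' (f : 'I_N' -> 'I_N) (g : 'I_N -> 'I_N') :
  cancel g f -> cancel (qmap g) (qmap f).
Proof.
by move=> gK t; case: (split_ordP t) => j ->; rewrite ?qmap_lshift ?qmap_rshift gK.
Qed.

Lemma qmap_inj N N' (f : 'I_N' -> 'I_N) : injective f -> injective (qmap f).
Proof.
move=> f_inj t1 t2.
by case: (split_ordP t1) => j1 ->; case: (split_ordP t2) => j2 ->;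
  rewrite ?qmap_lshift ?qmap_rshift => /eqP; rewrite eq_shift // => /eqP/f_inj ->.
Qed.

Lemma colsub_qmapE m N N' (f : 'I_N' -> 'I_N) (X : 'M['F_2]_(m, N + N)) :
  colsub (qmap f) X = row_mx (colsub f (lsubmx X)) (colsub f (rsubmx X)).
Proof.
apply/matrixP => i t; case: (split_ordP t) => j ->.
  by rewrite row_mxEl !mxE qmap_lshift.
by rewrite row_mxEr !mxE qmap_rshift.
Qed.

Lemma lsubmx_colsub_qmap m N N' (f : 'I_N' -> 'I_N) (X : 'M['F_2]_(m, N + N)) i j :
  lsubmx (colsub (qmap f) X) i j = lsubmx X i (f j).
Proof. by rewrite colsub_qmapE row_mxKl !mxE. Qed.

Lemma rsubmx_colsub_qmap m N N' (f : 'I_N' -> 'I_N) (X : 'M['F_2]_(m, N + N)) i j :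
  rsubmx (colsub (qmap f) X) i j = rsubmx X i (f j).
Proof. by rewrite colsub_qmapE row_mxKr !mxE. Qed.

Lemma colsub_qmapK p N N' (f : 'I_N' -> 'I_N) (g : 'I_N -> 'I_N')
    (X : 'M['F_2]_(p, N + N)) :
  cancel g f -> colsub (qmap g) (colsub (qmap f) X) = X.
Proof. by move=> gK; apply/matrixP => i a; rewrite !mxE qmapK. Qed.

Lemma min_dist_transfer m m' N N' d
    (M : 'M['F_2]_(m, N + N)) (M' : 'M['F_2]_(m', N' + N'))
    (phi : 'rV['F_2]_(N' + N') -> 'rV['F_2]_(N + N))
    (psi : 'rV['F_2]_(N + N) -> 'rV['F_2]_(N' + N')) :
  cancel psi phi ->
  (forall u, in_norm M' u <-> in_norm M (phi u)) ->
  (forall u, in_stab M' u <-> in_stab M (phi u)) ->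
  (forall u, pweight (phi u) = pweight u) ->
  min_dist M d -> min_dist M' d.
Proof.
move=> psiK normE stabE wE [[u [uN [uS <-]]] d_min]; split.
  by exists (psi u); rewrite normE stabE -wE psiK.
by move=> v /normE vN /stabE vS; rewrite -wE; apply: d_min.
Qed.

Lemma stab_code_mulmx N k d m (R : 'M['F_2]_m) (M : 'M['F_2]_(m, N + N)) :
  R \in unitmx -> stab_code N k d M -> stab_code N k d (R *m M).
Proof.
move=> R_unit [mE kN M_free M_comm M_dist].
have eqRM : (R *m M :=: M)%MS by apply: eqmxMfull; rewrite row_full_unit.
have MJM : M *m symp_mx N *m M^T = 0.
  by apply/matrixP => i j; rewrite -symp_rows M_comm mxE.
have RJR u : u *m symp_mx N *m (R *m M)^T = u *m symp_mx N *m M^T *m R^T.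
  by rewrite trmx_mul !mulmxA.
split=> //.
- by rewrite /row_free eqRM.
- by move=> i j; rewrite symp_rows RJR -!(mulmxA R) MJM mul0mx mulmx0 mxE.
apply: (min_dist_transfer (phi := id) (psi := id)) M_dist => // u.
  rewrite !in_normE RJR; split=> [uM0 | ->]; last by rewrite mul0mx.
  have RT_unit : R^T \in unitmx by rewrite unitmx_tr.
  by rewrite -[_ *m M^T](mulmxK RT_unit) uM0 mul0mx.
by rewrite /in_stab eqRM.
Qed.

Section QubitBijection.

Variables (N N' : nat) (f : 'I_N' -> 'I_N) (g : 'I_N -> 'I_N').
Hypotheses (fK : cancel f g) (gK : cancel g f).

Lemma symp_colsub (u v : 'rV['F_2]_(N + N)) :
  symp (colsub (qmap f) u) (colsub (qmap f) v) = symp u v.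
Proof.
rewrite /symp (reindex f) /=; last by exists g => ? _.
by apply: eq_bigr => j _; rewrite !lsubmx_colsub_qmap !rsubmx_colsub_qmap.
Qed.

Lemma pweight_colsub (u : 'rV['F_2]_(N + N)) :
  pweight (colsub (qmap f) u) = pweight u.
Proof.
rewrite /pweight -(card_imset _ (can_inj fK)); congr #|pred_of_set _|.
apply/setP => j; rewrite inE -[j in LHS]gK (mem_imset _ _ (can_inj fK)) inE.
by rewrite lsubmx_colsub_qmap rsubmx_colsub_qmap gK.
Qed.

Lemma in_norm_colsub m (M : 'M['F_2]_(m, N + N)) u :
  in_norm (colsub (qmap f) M) u <-> in_norm M (colsub (qmap g) u).
Proof.
have E i : symp u (row i (colsub (qmap f) M)) = symp (colsub (qmap g) u) (row i M).
  by rewrite row_colsub -{1}[u](colsub_qmapK _ fK) (symp_colsub (colsub _ u)).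
by split=> uM i; [rewrite -E | rewrite E].
Qed.

Lemma in_stab_colsub m (M : 'M['F_2]_(m, N + N)) u :
  in_stab (colsub (qmap f) M) u <-> in_stab M (colsub (qmap g) u).
Proof.
rewrite /in_stab; split=> uM.
  by have := submxMr (colsub (qmap g) 1%:M) uM; rewrite -!colsub_mul1 colsub_qmapK.
by have := submxMr (colsub (qmap f) 1%:M) uM; rewrite -!colsub_mul1 colsub_qmapK.
Qed.

Lemma mxrank_colsub m (M : 'M['F_2]_(m, N + N)) :
  \rank (colsub (qmap f) M) = \rank M.
Proof.
apply/eqP; rewrite eqn_leq {1}colsub_mul1 mxrankM_maxl /=.
by rewrite -{1}(colsub_qmapK M gK) [colsub (qmap g) _]colsub_mul1 mxrankM_maxl.
Qed.

End QubitBijection.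

Lemma stab_code_colsub N N' (f : 'I_N' -> 'I_N) (g : 'I_N -> 'I_N') k d m
    (M : 'M['F_2]_(m, N + N)) :
  cancel f g -> cancel g f ->
  stab_code N k d M -> stab_code N' k d (colsub (qmap f) M).
Proof.
move=> fK gK; have eN : N' = N.
  by rewrite -[N']card_ord -[N]card_ord; apply: bij_eq_card; exists g.
move=> [mE kN M_free M_comm M_dist]; split.
- by rewrite eN.
- by rewrite eN.
- by rewrite /row_free (mxrank_colsub gK).
- by move=> i j; rewrite !row_colsub (symp_colsub fK).
apply: (min_dist_transfer (psi := colsub (qmap f))) M_dist.
- by move=> u; apply: colsub_qmapK.
- exact: in_norm_colsub.
- exact: in_stab_colsub.
- by move=> u; rewrite (pweight_colsub gK).
Qed.

Lemma pweightD N (u v : 'rV['F_2]_(N + N)) :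
  (pweight (u + v) <= pweight u + pweight v)%N.
Proof.
rewrite /pweight; apply: leq_trans (leq_card_setU _ _).
apply: subset_leq_card; apply/subsetP => j; rewrite !inE !mxE.
apply: contraLR; rewrite !negb_or !negbK.
by case/and3P => /andP[/eqP-> /eqP->] /eqP-> /eqP->; rewrite !addr0 eqxx.
Qed.

Lemma pweight_eq0 N (u : 'rV['F_2]_(N + N)) : (pweight u == 0%N) = (u == 0).
Proof.
rewrite /pweight cards_eq0; apply/eqP/eqP => [/setP u0 | ->].
  apply/rowP => t; rewrite mxE; case: (split_ordP t) => j ->;
    by have := u0 j; rewrite !inE !mxE => /norP[/negbNE/eqP + /negbNE/eqP].
by apply/setP => j; rewrite !inE !mxE eqxx.
Qed.

Lemma pweight_le N (u : 'rV['F_2]_(N + N)) : (pweight u <= N)%N.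
Proof. by rewrite /pweight -[X in (_ <= X)%N]card_ord max_card. Qed.

Lemma pweight_symp_mx N (u : 'rV['F_2]_(N + N)) : pweight (u *m symp_mx N) = pweight u.
Proof.
rewrite /pweight mul_symp_mx row_mxKl row_mxKr.
by apply: eq_card => j; rewrite !inE orbC.
Qed.

Lemma stab_code_dist_gt0 N k d m (M : 'M['F_2]_(m, N + N)) :
  stab_code N k d M -> (0 < d)%N.
Proof.
case=> _ _ _ _ [[u [_ [uS <-]]] _]; rewrite lt0n pweight_eq0.
by apply/eqP => u0; apply: uS; rewrite u0 /in_stab sub0mx.
Qed.

Lemma stab_code_corrects N k d m (M : 'M['F_2]_(m, N + N)) :
  stab_code N k d M -> corrects M ((d - 1) %/ 2).
Proof.
move=> MC e1 e2 e1w e2w eN; have d_gt0 := stab_code_dist_gt0 MC.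
case: MC => _ _ _ _ [_ d_min]; apply/negPn/negP => eS.
have := d_min _ eN (negP eS); have := pweightD e1 e2; lia.
Qed.

Lemma qperm_colsub m n (p : 'S_n) (H : 'M['F_2]_(m, n + n)) :
  qperm p H = colsub (qmap p) H.
Proof. by rewrite colsub_qmapE /qperm !col_permEsub. Qed.

Lemma del_last_colsub m n c (X : 'M['F_2]_(m, n + n)) :
  del_last c X = colsub (qmap (widen_ord (leq_subr c n))) X.
Proof. by rewrite colsub_qmapE. Qed.

Lemma sum_pick (R : pzSemiRingType) c x (F : nat -> R) :
  \sum_(t < c) F t * (x == t :> nat)%:R = (x < c)%:R * F x.
Proof.
case: (ltnP x c) => [xc | cx].
  rewrite (bigD1 (Ordinal xc)) //= eqxx mulr1 mul1r big1 ?addr0 // => t tx.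
  rewrite (_ : (x == t :> nat) = false) ?mulr0 //.
  by apply: contraNF tx => /eqP xt; apply/eqP/val_inj; rewrite /= xt.
rewrite mul0r big1 // => t _; rewrite (_ : (x == t :> nat) = false) ?mulr0 //.
by apply/negbTE; rewrite neq_ltn (leq_trans (ltn_ord t) cx) orbT.
Qed.

Lemma symp_ea_ext m n' c (X : 'M['F_2]_(m, n' + n')) (i j : 'I_m) :
  symp (row i (ea_ext c X)) (row j (ea_ext c X)) =
  symp (row i X) (row j X) + ((i < c)%N && (j == (i + c)%N :> nat))%:R
                           + ((j < c)%N && (i == (j + c)%N :> nat))%:R.
Proof.
rewrite !symp_rowsE big_split_ord /= -addrA; congr (_ + _).
  by apply: eq_bigr => t _; rewrite /ea_ext !(row_mxEl, row_mxEr) !mxE.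
rewrite big_split /=.
under eq_bigr do rewrite /ea_ext !(row_mxEl, row_mxEr) !mxE.
under [X in _ + X]eq_bigr do rewrite /ea_ext !(row_mxEl, row_mxEr) !mxE mulrC.
rewrite addrC !(sum_pick c _ (fun t => (_ == (c + t)%N :> nat)%:R)).
by rewrite -!natrM !mulnb !(addnC c).
Qed.

Lemma stab_code_ea_simplified m n' c k d (G : 'M['F_2]_(m, n' + n')) :
  (2 * c <= m)%N -> stab_code (n' + c) k d (ea_ext c G) -> ea_simplified c G.
Proof.
move=> cm [_ _ _ EA_comm _]; split=> // i j; apply: F2_addr_eq0.
rewrite natr_or ?addrA -?symp_ea_ext ?EA_comm //.
by apply/negP => /andP[/andP[ic /eqP ji] /andP[jc /eqP ij]]; lia.
Qed.

(* Row [i] of the reordered standard form is row [ea_row_order s c i] of the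
   original: first the c rows whose Z-identity block meets the deleted qubits
   (the g'_i), then the c rows whose X-identity block does (the h'_i), then the
   remaining rows in their original order. *)
Definition ea_row_order (s c i : nat) : nat :=
  (if i < c then 2 * s - c + i
   else if i < 2 * c then i + s - 2 * c
   else if i < s + c then i - 2 * c
   else if i < 2 * s then i - c
   else i)%N.

Section EaRowOrder.

Variables (s c : nat).
Hypothesis cs : (c <= s)%N.

Lemma ea_row_order_lt m i :
  (2 * s <= m)%N -> (i < m)%N -> (ea_row_order s c i < m)%N.
Proof. by rewrite /ea_row_order; repeat case: ifP; lia. Qed.

Lemma ea_row_order_inj : injective (ea_row_order s c).
Proof. by move=> i1 i2; rewrite /ea_row_order; repeat case: ifP; lia. Qed.

Lemma ea_row_orderX i l :
  (l < c)%N -> (ea_row_order s c i == s - c + l)%N = (i == c + l)%N.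
Proof. by move=> lc; apply/eqP/eqP; rewrite /ea_row_order; repeat case: ifP; lia. Qed.

Lemma ea_row_orderZ i l : (l < c)%N ->
  (s <= ea_row_order s c i)%N && (ea_row_order s c i - s == s - c + l)%N = (i == l).
Proof. by move=> lc; apply/andP/eqP; rewrite /ea_row_order; repeat case: ifP; lia. Qed.

End EaRowOrder.

Lemma ea_ext_del_last m n c (M : 'M['F_2]_(m, n + n)) (cn : (c <= n)%N) :
    (forall i (j : 'I_n), (n - c <= j)%N ->
       lsubmx M i j = (i == c + (j - (n - c)) :> nat)%N%:R /\
       rsubmx M i j = (i == j - (n - c) :> nat)%N%:R) ->
  ea_ext c (del_last c M) = colsub (qmap (cast_ord (subnK cn))) M.
Proof.
move=> M_last; rewrite del_last_colsub; apply/matrixP => i t; rewrite mxE /ea_ext.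
case: (split_ordP t) => u ->; case: (split_ordP u) => j ->;
  rewrite !(row_mxEl, row_mxEr) !mxE !(qmap_lshift, qmap_rshift);
  try by congr (M i (_ _)); apply: val_inj.
all: have [X Z] := M_last i (cast_ord (subnK cn) (rshift (n - c) j)) (leq_addr _ _).
all: by rewrite !mxE /= addKn in X Z; rewrite ?X ?Z.
Qed.

Lemma std_form_eaqec n k d s c (H : 'M['F_2]_(n - k, n + n)) :
  stab_code n k d H -> std_form s H -> (c <= s)%N ->
  exists T : 'M['F_2]_(n - k),
    eaqec_AB_via (n - c) k d c (del_last c H) T /\
    corrects (ea_ext c (T *m del_last c H)) ((d - 1) %/ 2).
Proof.
move=> H_code [sm H_std] cs; have cn : (c <= n)%N by lia.
pose tau (i : 'I_(n - k)) := Ordinal (ea_row_order_lt cs sm (ltn_ord i)).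
have tau_inj : injective tau.
  by move=> i1 i2 /(congr1 val) /(ea_row_order_inj cs) /val_inj.
pose T : 'M['F_2]_(n - k) := perm_mx (perm tau_inj).
have EA : ea_ext c (T *m del_last c H) = colsub (qmap (cast_ord (subnK cn))) (T *m H).
  rewrite del_last_colsub mulmx_colsub -del_last_colsub -row_permE.
  apply: ea_ext_del_last => i j jc.
  have l_lt : (j - (n - c) < c)%N by have := ltn_ord j; lia.
  have [X Z] := H_std (tau i) j (leq_trans (leq_sub2l _ cs) jc).
  rewrite !mxE permE in X Z *; rewrite X Z /=.
  have -> : (j - (n - s) = s - c + (j - (n - c)))%N by lia.
  by rewrite ea_row_orderX ?ea_row_orderZ.
have EA_code : stab_code (n - c + c) k d (ea_ext c (T *m del_last c H)).
  rewrite EA; apply: (stab_code_colsub (cast_ordK _) (cast_ordKV _)).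
  by apply: stab_code_mulmx H_code; apply: unitmx_perm.
exists T; split; last exact: stab_code_corrects EA_code.
split; [apply: unitmx_perm | | exact: EA_code].
by apply: stab_code_ea_simplified EA_code; lia.
Qed.

Lemma exists_unit_mulmx_pid (F : fieldType) m r (A : 'M[F]_(m, r)) :
  \rank A = r -> exists2 R : 'M_m, R \in unitmx & R *m A = pid_mx r.
Proof.
move=> rA; have rm : (r <= m)%N by rewrite -rA rank_leq_row.
move: A rA; rewrite -(subnKC rm) => A rA.
have AE := mulmx_ebase A; rewrite rA in AE.
set L := col_ebase A in AE *; set U := row_ebase A in AE *.
have [L_unit U_unit] : L \in unitmx /\ U \in unitmx.
  by split; [apply: col_ebase_unit | apply: row_ebase_unit].
exists (block_mx (invmx U) 0 0 1%:M *m invmx L).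
  rewrite unitmx_mul unitmx_inv L_unit unitmxE det_ublock det1 mulr1.
  by rewrite -unitmxE unitmx_inv U_unit.
rewrite -AE -!mulmxA mulKmx // pid_mx_col mulmxA mul_block_col.
by rewrite !mulmx1 !mulmx0 !addr0 mul_col_mx mulVmx // mul0mx.
Qed.

Lemma colsub1_trK (R : pzRingType) N N' (h : 'I_N' -> 'I_N) :
  injective h -> (colsub h (1%:M : 'M[R]_N))^T *m colsub h 1%:M = 1%:M.
Proof.
move=> h_inj; apply/matrixP => t t'.
by rewrite mulmx_colsub mulmx1 !mxE (inj_eq h_inj) eq_sym.
Qed.

Lemma mul_tr_colsub1_out (R : pzRingType) N N' (h : 'I_N' -> 'I_N)
    (w : 'rV[R]_N') a :
  a \notin codom h -> (w *m (colsub h 1%:M)^T) 0 a = 0.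
Proof.
move=> ha; rewrite mxE big1 // => t _; rewrite !mxE.
rewrite (_ : (a == h t) = false) ?mulr0 //.
by apply: contraNF ha => /eqP->; apply: codom_f.
Qed.

Lemma codom_qmap N N' (f : 'I_N' -> 'I_N) (j : 'I_N) :
  (lshift N j \in codom (qmap f)) || (rshift N j \in codom (qmap f)) -> j \in codom f.
Proof.
by case/orP => /codomP[t]; case: (split_ordP t) => l ->;
  rewrite ?qmap_lshift ?qmap_rshift => /eqP; rewrite eq_shift // => /eqP->;
  apply: codom_f.
Qed.

Lemma pweight_mul_tr_colsub1 N s (q : 'I_s -> 'I_N) (w : 'rV['F_2]_(s + s)) :
  injective q -> (pweight (w *m (colsub (qmap q) 1%:M)^T) <= s)%N.
Proof.
move=> q_inj; rewrite /pweight -[X in (_ <= X)%N]card_ord -(card_codom q_inj).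
apply: subset_leq_card; apply/subsetP => j; rewrite inE; apply: contraTT => jq.
have jl : lshift N j \notin codom (qmap q).
  by apply: contra jq => jl; apply: codom_qmap; rewrite jl.
have jr : rshift N j \notin codom (qmap q).
  by apply: contra jq => jr; apply: codom_qmap; rewrite jr orbT.
by rewrite [lsubmx _ _ _]mxE [rsubmx _ _ _]mxE !mul_tr_colsub1_out ?eqxx.
Qed.

Lemma nondegenerate_mxrank_colsub m N d s (H : 'M['F_2]_(m, N + N))
    (q : 'I_s -> 'I_N) :
  injective q -> (s < d)%N -> nondegenerate_code H d ->
  \rank (colsub (qmap q) H) = (s + s)%N.
Proof.
move=> q_inj sd nd; set P := colsub (qmap q) (1%:M : 'M['F_2]_(N + N)).
apply/eqP; rewrite -mxrank_tr -[X in _ == X]/(s + s)%N -/(row_free _) -kermx_eq0.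
apply/rowV0P => w; rewrite sub_kermx => /eqP wH.
(* A dependency [w] among the 2s selected columns is, after swapping X and Z,
   a normalizer element supported on s < d qubits. *)
pose u := w *m P^T *m symp_mx N.
have u_norm : in_norm H u.
  apply/in_normE; rewrite /u -(mulmxA (w *m P^T)) symp_mxK mulmx1 -mulmxA -trmx_mul.
  by rewrite -colsub_mul1.
have uJ : u *m symp_mx N = w *m P^T by rewrite -mulmxA symp_mxK mulmx1.
have : u == 0.
  apply/negPn/negP => u_nz; have := nd _ u_norm u_nz.
  rewrite -(pweight_symp_mx u) uJ => /leq_trans/(_ (pweight_mul_tr_colsub1 w q_inj)).
  by rewrite leqNgt sd.
move/eqP=> u0; rewrite -[w]mulmx1 -(colsub1_trK _ (qmap_inj q_inj)).
by rewrite mulmxA -uJ u0 !mul0mx.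
Qed.

Definition last_qubit n s (sn : (s <= n)%N) (l : 'I_s) : 'I_n :=
  cast_ord (subnK sn) (rshift (n - s) l).

Lemma last_qubit_inj n s (sn : (s <= n)%N) : injective (last_qubit sn).
Proof. by move=> l1 l2 /cast_ord_inj/rshift_inj. Qed.

Lemma std_form_pid m n s (sn : (s <= n)%N) (M : 'M['F_2]_(m, n + n)) :
  (2 * s <= m)%N -> colsub (qmap (last_qubit sn)) M = pid_mx (s + s) -> std_form s M.
Proof.
move=> sm MP; split=> // i j jn.
have l_lt : (j - (n - s) < s)%N by have := ltn_ord j; lia.
have [l <-] : exists l, last_qubit sn l = j.
  by exists (Ordinal l_lt); apply: val_inj => /=; lia.
have entry t : M i (qmap (last_qubit sn) t) = pid_mx (s + s) i t by rewrite -MP mxE.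
rewrite [lsubmx _ _ _]mxE [rsubmx _ _ _]mxE -qmap_lshift -qmap_rshift !entry.
rewrite !mxE /= addKn.
have ls := ltn_ord l; split; congr ((nat_of_bool _)%:R).
  by apply/andP/eqP => [[/eqP] | ->] //; split => //; lia.
by apply/andP/andP => [[/eqP-> _] | [si /eqP il]]; split; rewrite ?eqn_leq; lia.
Qed.

Lemma nondegenerate_std_form n k d (H : 'M['F_2]_(n - k, n + n)) :
  stab_code n k d H -> nondegenerate_code H d ->
  exists2 R : 'M['F_2]_(n - k), R \in unitmx & std_form (d - 1) (R *m H).
Proof.
move=> H_code nd; have d_gt0 := stab_code_dist_gt0 H_code.
have dn : (d - 1 <= n)%N.
  by case: H_code => _ _ _ _ [[u [_ [_ <-]]] _]; have := pweight_le u; lia.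
have dd : (d - 1 < d)%N by lia.
have rk := nondegenerate_mxrank_colsub (@last_qubit_inj _ _ dn) dd nd.
have [R R_unit RH] := exists_unit_mulmx_pid rk.
exists R => //; apply: (@std_form_pid _ _ _ dn); last by rewrite -mulmx_colsub RH.
by have := rank_leq_row (colsub (qmap (last_qubit dn)) H); rewrite rk; lia.
Qed.

Unset Implicit Arguments.

Theorem theorem1 (n k d : nat) (H : 'M['F_2]_(n - k, n + n)) :
  stab_code n k d H ->
  [/\ (* H can be brought to standard form *)
      (exists (s : nat) (R : 'M['F_2]_(n - k)) (p : 'S_n),
          R \in unitmx /\ std_form s (R *m qperm p H)),
      (* every standard form yields EAQEC codes by deleting columns *)
      (forall (s : nat) (R : 'M['F_2]_(n - k)) (p : 'S_n),
          R \in unitmx -> std_form s (R *m qperm p H) ->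
          forall c : nat, (c <= s)%N ->
            exists T : 'M['F_2]_(n - k),
              eaqec_AB_via (n - c) k d c (del_last c (R *m qperm p H)) T /\
              corrects (ea_ext c (T *m del_last c (R *m qperm p H))) ((d - 1) %/ 2))
    & (* nondegenerate_code case: a standard form with d - 1 <= s <= (n - k)/2 *)
      (nondegenerate_code H d ->
        exists (s : nat) (R : 'M['F_2]_(n - k)) (p : 'S_n),
          [/\ R \in unitmx, std_form s (R *m qperm p H) &
              (d - 1 <= s <= (n - k) %/ 2)%N])].
Proof.
move=> H_code; have qperm1 : qperm 1 H = H by rewrite /qperm !col_perm1 hsubmxK.
split.
- (* s = 0 is a standard form: its identity blocks are empty. *)
  exists 0%N, 1%:M, 1%g; split; first exact: unitmx1.
  by rewrite mul1mx qperm1; split=> // i j; rewrite subn0 leqNgt ltn_ord.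
- move=> s R p R_unit H_std c cs; apply: std_form_eaqec H_std cs.
  have pH_code := stab_code_colsub (permK p) (permKV p) H_code.
  by rewrite qperm_colsub; apply: stab_code_mulmx.
- move=> nd; have [R R_unit R_std] := nondegenerate_std_form H_code nd.
  exists (d - 1)%N, R, 1%g; rewrite qperm1; split=> //.
  by case: R_std => sm _; rewrite leqnn leq_divRL //; lia.
Qed.
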